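(* Let $k\geq 3$ be an integer such that $2k=p^{\alpha}+1\equiv 2 \pmod 4$ for some prime $p$ and non-negative integer $\alpha$. Then there exists a $(2k,k)$ complex equiangular tight frame.
   Context: An $(N,r)$ frame is a Parseval frame of $N$ vectors $f_1,\dots,f_N$ in $\mathbb{C}^r$ with the usual inner product, i.e. $\sum_{i=1}^N|\langle x,f_i\rangle|^2=\|x\|^2$ for all $x\in\mathbb{C}^r$. An $(N,r)$ complex equiangular tight frame (CETF) is an $(N,r)$ frame such that $\|f_i\|$ is the same for all $i$ and $|\langle f_i,f_j\rangle|$ is the same for all $i\neq j$. *)

From mathcomp Require Import all_boot all_order all_algebra.
From mathcomp Require Import reals complex.
Set Implicit Arguments. Unset Strict Implicit. Unset Printing Implicit Defensive.
Import Order.TTheory GRing.Theory Num.Theory Num.Def.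
Local Open Scope ring_scope.

Section Frames.
Variable C : numClosedFieldType.

Definition cinner (r : nat) (x y : 'I_r -> C) : C :=
  \sum_(j < r) x j * (y j)^*.

Definition cnorm2 (r : nat) (x : 'I_r -> C) : C := cinner x x.

Definition parseval_frame (N r : nat) (f : 'I_N -> 'I_r -> C) : Prop :=
  forall x : 'I_r -> C, \sum_(i < N) `|cinner x (f i)| ^+ 2 = cnorm2 x.

Definition CETF (N r : nat) (f : 'I_N -> 'I_r -> C) : Prop :=
  [/\ parseval_frame f,
      (exists c : C, forall i : 'I_N, sqrtC (cnorm2 (f i)) = c) &
      (exists a : C, forall i j : 'I_N, i != j -> `|cinner (f i) (f j)| = a)].
End Frames.

From mathcomp Require Import all_boot all_order all_algebra all_field zify.
From mathcomp Require Import reals complex sesquilinear spectral.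
Set Implicit Arguments.
Unset Strict Implicit.
Unset Printing Implicit Defensive.
Import Order.TTheory GRing.Theory Num.Theory Num.Def.
Local Open Scope ring_scope.
Local Open Scope sesquilinear_scope.

(* For a prime power q = 2k - 1 with q = 1 (mod 4), the quadratic character chi of
   F_q is even, so the Paley matrix Q on the projective line F_q u {oo}
   (Q(x,y) = chi(x - y), Q(oo,x) = Q(x,oo) = 1, zero diagonal) is a symmetric
   conference matrix: Q^2 = q I, by the Jacobsthal sums
   sum_z chi(z) chi(z + c) = -1 (c <> 0).  Hence P = (I + Q / sqrt q) / 2 is an
   orthogonal projection of trace k with constant diagonal 1/2 and off-diagonal
   entries of modulus 1 / (2 sqrt q).  Writing P = W^* W with W W^* = I, the 2k
   columns of W form an equiangular Parseval frame in C^k. *)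

Section ColumnFrame.
Variable C : numClosedFieldType.

Lemma trmxC_mul m n p (A : 'M[C]_(m, n)) (B : 'M[C]_(n, p)) :
  (A *m B) ^t* = B ^t* *m A ^t*.
Proof. by rewrite trmx_mul map_mxM. Qed.

Lemma sum_normCK_col m (u : 'cV[C]_m) : \sum_i `|u i 0| ^+ 2 = (u ^t* *m u) 0 0.
Proof. by rewrite !mxE; apply: eq_bigr => i _; rewrite !mxE normCK mulrC. Qed.

Variables k N : nat.
Implicit Type W : 'M[C]_(k, N).

Definition col_frame W : 'I_N -> 'I_k -> C := fun i l => W l i.

Lemma cinner_col_frame W i j :
  cinner (col_frame W i) (col_frame W j) = (W ^t* *m W) j i.
Proof. by rewrite !mxE; apply: eq_bigr => l _; rewrite !mxE mulrC. Qed.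

Lemma parseval_col_frame W : W \is unitarymx -> parseval_frame (col_frame W).
Proof.
move=> /unitarymxP WWt x; pose u := \col_l x l.
have cinnerE i : cinner x (col_frame W i) = (W ^t* *m u) i 0.
  by rewrite !mxE; apply: eq_bigr => l _; rewrite !mxE mulrC.
under eq_bigr => i _ do rewrite cinnerE.
rewrite sum_normCK_col trmxC_mul trmxCK mulmxA -(mulmxA _ W) WWt mulmx1.
by rewrite -sum_normCK_col; apply: eq_bigr => l _; rewrite mxE normCK.
Qed.

Lemma CETF_col_frame W c a : W \is unitarymx ->
  (forall i, (W ^t* *m W) i i = c) ->
  (forall i j, i != j -> `|(W ^t* *m W) i j| = a) -> CETF (col_frame W).
Proof.
move=> Wu Gd Go; split; first exact: parseval_col_frame.
  by exists (sqrtC c) => i; rewrite /cnorm2 cinner_col_frame Gd.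
by exists a => i j ij; rewrite cinner_col_frame Go // eq_sym.
Qed.
End ColumnFrame.

Section Projector.
Variables (C : numClosedFieldType) (n : nat) (P : 'M[C]_n).
Hypotheses (PP : P *m P = P) (Ph : P ^t* = P).

Lemma unitary_rowspace_projector r (W : 'M[C]_(r, n)) :
  W \is unitarymx -> (W :=: P)%MS -> W ^t* *m W = P.
Proof.
move=> /unitarymxP WWt WP.
have PWt : P *m W ^t* = W ^t*.
  have [X WE] : exists X, W = X *m P by apply/submxP; rewrite WP.
  by rewrite -Ph -trmxC_mul WE -mulmxA PP.
have [Y PE] : exists Y, P = Y *m W by apply/submxP; rewrite -WP.
by rewrite -PWt {1}PE -(mulmxA Y) WWt mulmx1 -PE.
Qed.

Lemma projector_factor r : \tr P = r%:R ->
  exists2 W : 'M[C]_(r, n), W \is unitarymx & W ^t* *m W = P.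
Proof.
move=> trP; pose W := schmidt (row_base P).
have Wu : W \is unitarymx by apply: schmidt_unitarymx; exact: rank_leq_col.
have WtW : W ^t* *m W = P.
  apply: unitary_rowspace_projector Wu _.
  by apply: eqmx_trans (eq_row_base P); apply: eqmx_schmidt_free; exact: row_base_free.
have rkP : \rank P = r.
  apply/eqP; rewrite -(eqr_nat C) -trP -[P in \tr P]WtW mxtrace_mulC.
  by rewrite (unitarymxP Wu) mxtrace1.
by move: W Wu WtW; rewrite rkP => W; exists W.
Qed.
End Projector.

Section ConferenceProjector.
Variables (C : numClosedFieldType) (N n : nat) (Q : 'M[C]_N).
Hypotheses (n_gt0 : (0 < n)%N) (Qh : Q ^t* = Q) (QQ : Q *m Q = n%:R%:M).

Let s : C := sqrtC n%:R.

Lemma sqrtC_nat_gt0 : 0 < s.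
Proof. by rewrite sqrtC_gt0 ltr0n. Qed.

Definition conference_proj : 'M[C]_N := 2^-1 *: (1%:M + s^-1 *: Q).

Lemma conference_projE i j :
  conference_proj i j = 2^-1 * ((i == j)%:R + s^-1 * Q i j).
Proof. by rewrite !mxE. Qed.

Lemma conference_proj_idem : conference_proj *m conference_proj = conference_proj.
Proof.
have s2 : (s * s)^-1 * n%:R = 1 by rewrite -expr2 sqrtCK mulVf // pnatr_eq0 -lt0n.
have sqrE : (1%:M + s^-1 *: Q) *m (1%:M + s^-1 *: Q) = 2%:R *: (1%:M + s^-1 *: Q).
  rewrite mulmxDl !mulmxDr !mul1mx mulmx1 -scalemxAl -scalemxAr scalerA QQ.
  by rewrite scale_scalar_mx -invfM s2 scaler_nat mulr2n [s^-1 *: Q + _]addrC.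
rewrite /conference_proj -scalemxAl -scalemxAr sqrE !scalerA.
by rewrite divfK // pnatr_eq0.
Qed.

Lemma conference_proj_herm : conference_proj ^t* = conference_proj.
Proof.
have sR : s^* = s by apply/conj_Creal/gtr0_real/sqrtC_nat_gt0.
apply/matrixP => i j.
have := congr1 (fun M : 'M[C]_N => M i j) Qh; rewrite !mxE => Qij.
by rewrite !(rmorphM, rmorphD, rmorphMn, rmorph1, fmorphV, rmorph_nat) /= sR Qij eq_sym.
Qed.

Hypothesis Qdiag : forall i, Q i i = 0.

Lemma conference_proj_diag i : conference_proj i i = 2^-1.
Proof. by rewrite conference_projE eqxx Qdiag mulr0 addr0 mulr1. Qed.

Lemma conference_proj_trace : \tr conference_proj = 2^-1 *+ N.
Proof.
by rewrite /mxtrace (eq_bigr _ (fun i _ => conference_proj_diag i)) sumr_const card_ord.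
Qed.

Hypothesis Qnorm : forall i j, i != j -> `|Q i j| = 1.

Lemma conference_proj_offdiag i j : i != j -> `|conference_proj i j| = 2^-1 * s^-1.
Proof.
move=> ij; rewrite conference_projE (negbTE ij) add0r !normrM Qnorm // mulr1.
by rewrite !ger0_norm ?invr_ge0 ?ler0n ?ltW ?sqrtC_nat_gt0.
Qed.

Lemma conference_CETF k : N = (2 * k)%N -> exists f : 'I_N -> 'I_k -> C, CETF f.
Proof.
move=> NE.
have halfK : (2^-1 : C) *+ 2 = 1 by rewrite -[RHS](@mulVf _ 2) ?pnatr_eq0 // mulr_natr.
have trP : \tr conference_proj = k%:R by rewrite conference_proj_trace NE mulrnA halfK.
have [W Wu WtW] := projector_factor conference_proj_idem conference_proj_herm trP.
exists (col_frame W); apply: CETF_col_frame Wu _ _ => [i | i j ij]; rewrite WtW.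
  exact: conference_proj_diag.
exact: conference_proj_offdiag.
Qed.
End ConferenceProjector.

Section QuadraticCharacter.
Variable F : finFieldType.
Hypothesis oddF : odd #|F|.

Let m := (#|F|.-1)./2.

Lemma half_card_double : m.*2 = #|F|.-1.
Proof.
rewrite /m; move: oddF; case: #|F| => //= n /negbTE n_even.
by rewrite -[RHS]odd_double_half n_even.
Qed.

Lemma half_card_gt0 : (0 < m)%N.
Proof. by rewrite -double_gt0 half_card_double -subn1 subn_gt0 card_finNzRing_gt1. Qed.

Lemma sqr_expr_half_card (x : F) : x != 0 -> (x ^+ m) ^+ 2 = 1.
Proof.
move=> x0; rewrite -exprM muln2 half_card_double; apply: (mulfI x0).
by rewrite mulr1 -exprS prednK ?expf_card // ltnW ?card_finNzRing_gt1.
Qed.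

(* Euler's criterion: for x <> 0, x ^+ m is 1 on squares and -1 otherwise. *)
Definition quad_char (x : F) : int :=
  if x == 0 then 0 else if x ^+ m == 1 then 1 else -1.

Lemma quad_char0 : quad_char 0 = 0.
Proof. by rewrite /quad_char eqxx. Qed.

Lemma quad_char_nz (x : F) : x != 0 -> quad_char x = if x ^+ m == 1 then 1 else -1.
Proof. by rewrite /quad_char => /negbTE ->. Qed.

Lemma quad_char_sqr (x : F) : x != 0 -> quad_char x * quad_char x = 1.
Proof. by move=> x0; rewrite quad_char_nz //; case: ifP. Qed.

Lemma quad_charM (x y : F) : quad_char (x * y) = quad_char x * quad_char y.
Proof.
have [->|x0] := eqVneq x 0; first by rewrite mul0r quad_char0 mul0r.
have [->|y0] := eqVneq y 0; first by rewrite mulr0 quad_char0 mulr0.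
have pm (z : F) : z != 0 -> z ^+ m != 1 -> z ^+ m = -1.
  move=> z0 z1; have /eqP := sqr_expr_half_card z0.
  by rewrite sqrf_eq1 (negbTE z1) => /eqP.
rewrite !quad_char_nz ?mulf_neq0 // exprMn.
case: (eqVneq (x ^+ m) 1) => [-> | x1]; first by rewrite !mul1r.
have xm := pm x x0 x1; rewrite xm in x1 *.
case: (eqVneq (y ^+ m) 1) => [-> | y1]; first by rewrite !mulr1 (negbTE x1).
by rewrite (pm y y0 y1) mulrNN mulr1 eqxx.
Qed.

Lemma quad_char1 : quad_char 1 = 1.
Proof. by rewrite quad_char_nz ?oner_eq0 // expr1n eqxx. Qed.

Lemma quad_charN1 : (4 %| #|F|.-1)%N -> quad_char (-1) = 1.
Proof.
rewrite -half_card_double -muln2 -[4%N]/(2 * 2)%N dvdn_pmul2r // dvdn2 => m_even.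
by rewrite quad_char_nz ?oppr_eq0 ?oner_eq0 // -signr_odd (negbTE m_even) eqxx.
Qed.

Lemma quad_charN (x : F) : (4 %| #|F|.-1)%N -> quad_char (- x) = quad_char x.
Proof. by move=> q4; rewrite -mulN1r quad_charM quad_charN1 ?mul1r. Qed.

Lemma exists_quad_nonresidue : exists g : F, quad_char g = -1.
Proof.
(* Otherwise the q - 1 nonzero elements are all roots of 'X^m - 1, and m < q - 1. *)
case: (pickP (fun g => quad_char g == -1)) => [g /eqP | nonres]; first by exists g.
have roots : all (root ('X^m - 1)) (enum (predC1 (0 : F))).
  apply/allP => x; rewrite mem_enum /= => x0; have := nonres x.
  rewrite /= quad_char_nz // /root !hornerE.
  by case: (x ^+ m =P 1) => [-> _ | _]; rewrite ?subrr ?eqxx.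
have := max_poly_roots (monic_neq0 (monicXnsubC 1 half_card_gt0)) roots (enum_uniq _).
rewrite size_XnsubC ?half_card_gt0 // -cardE cardC1 -half_card_double.
by rewrite -addnn => ?; exfalso; have := half_card_gt0; lia.
Qed.

Lemma sum_quad_char : \sum_(x : F) quad_char x = 0.
Proof.
have [g gN] := exists_quad_nonresidue.
have g0 : g != 0 by apply: contra_eqN gN => /eqP ->; rewrite quad_char0.
have : \sum_(x : F) quad_char x = - \sum_(x : F) quad_char x.
  rewrite {1}(reindex_inj (mulfI g0)) -sumrN /=.
  by apply: eq_bigr => x _; rewrite quad_charM gN mulN1r.
by move/eqP; rewrite -addr_eq0 -mulr2n mulrn_eq0 => /eqP.
Qed.

Lemma sum_quad_char_shift (c : F) : c != 0 ->
  \sum_(z : F) quad_char z * quad_char (z + c) = -1.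
Proof.
move=> c0.
have termE z : quad_char z * quad_char (z + c) = quad_char (1 + c / z) - (z == 0)%:R.
  have [->|z0] := eqVneq z 0.
    by rewrite quad_char0 mul0r invr0 mulr0 addr0 quad_char1 subrr.
  have -> : z + c = z * (1 + c / z) by rewrite mulrDr mulr1 mulrCA mulfV ?mulr1.
  by rewrite quad_charM mulrA quad_char_sqr // mul1r subr0.
have shift_inj : injective (fun z : F => 1 + c / z).
  by move=> a b /addrI /(mulfI c0) /invr_inj.
have shiftE : \sum_(z : F) quad_char (1 + c / z) = \sum_(z : F) quad_char z.
  by rewrite [RHS](reindex_inj shift_inj).
rewrite (eq_bigr _ (fun z _ => termE z)) sumrB shiftE sum_quad_char sub0r.
by rewrite (bigD1 0) // eqxx big1 ?addr0 // => z /negbTE ->.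
Qed.

Lemma quad_char_subC (x y : F) :
  (4 %| #|F|.-1)%N -> quad_char (x - y) = quad_char (y - x).
Proof. by move=> q4; rewrite -opprB quad_charN. Qed.

Lemma sum_quad_char_subr (x : F) : \sum_(z : F) quad_char (z - x) = 0.
Proof.
rewrite (reindex_inj (addIr x)) /=; under eq_bigr => z _ do rewrite addrK.
exact: sum_quad_char.
Qed.

Lemma sum_quad_char_sqr : \sum_(z : F) quad_char z * quad_char z = #|F|%:R - 1.
Proof.
rewrite (bigD1 0) //= quad_char0 mul0r add0r.
rewrite (eq_bigr (fun _ => 1)) => [|z z0]; last exact: quad_char_sqr.
rewrite sumr_const (_ : #|_| = #|F|.-1); last by rewrite -(cardC1 0); apply: eq_card.
by rewrite -[in RHS](prednK (ltnW (card_finNzRing_gt1 F))) -addn1 natrD addrK.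
Qed.

Lemma sum_quad_char_pair (x y : F) :
  \sum_(z : F) quad_char (z - x) * quad_char (z - y) = (x == y)%:R * #|F|%:R - 1.
Proof.
rewrite (reindex_inj (addIr x)) /=.
under eq_bigr => z _ do rewrite addrK -addrA.
have [<- | xy] := eqVneq x y.
  by under eq_bigr => z _ do rewrite subrr addr0; rewrite mul1r sum_quad_char_sqr.
by rewrite mul0r sub0r sum_quad_char_shift // subr_eq0.
Qed.
End QuadraticCharacter.

Lemma big_option (V : nmodType) (T : finType) (f : option T -> V) :
  \sum_(o : option T) f o = f None + \sum_(x : T) f (Some x).
Proof.
rewrite (bigD1 None) //=; congr (_ + _).
rewrite (reindex_omap Some id) => [|[x|] //].
by apply: eq_bigl => x; rewrite eqxx.
Qed.

Section PaleyKernel.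
Variable F : finFieldType.
Hypothesis q4 : (4 %| #|F|.-1)%N.

Lemma odd_card_1mod4 : odd #|F|.
Proof.
have q1 := card_finNzRing_gt1 F; have /dvdnP [t qE] := q4.
by rewrite -(prednK (ltnW q1)) qE oddS oddM andbF.
Qed.

Let oddF := odd_card_1mod4.

(* [None] is the point at infinity of the projective line over F. *)
Definition paley (a b : option F) : int :=
  match a, b with
  | Some x, Some y => quad_char (x - y)
  | None, None => 0
  | _, _ => 1
  end.

Lemma paley_sym a b : paley a b = paley b a.
Proof. by case: a b => [x|] [y|] //=; rewrite (quad_char_subC oddF). Qed.

Lemma paley_diag a : paley a a = 0.
Proof. by case: a => [x|] //=; rewrite subrr quad_char0. Qed.

Lemma paley_norm a b : a != b -> `|paley a b| = 1.
Proof.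
case: a b => [x|] [y|] //= xy; rewrite quad_char_nz; first by case: ifP.
by rewrite subr_eq0; apply: contraNneq xy => ->.
Qed.

Lemma paley_mul a b :
  \sum_(c : option F) paley a c * paley c b = (a == b)%:R * #|F|%:R.
Proof.
rewrite big_option; case: a b => [x|] [y|] /=.
- under eq_bigr => z _ do rewrite (quad_char_subC oddF x z q4).
  by rewrite mul1r sum_quad_char_pair // addrC subrK.
- under eq_bigr => z _ do rewrite mulr1 (quad_char_subC oddF x z q4).
  by rewrite mulr0 add0r sum_quad_char_subr // mul0r.
- under eq_bigr => z _ do rewrite mul1r.
  by rewrite mul0r add0r sum_quad_char_subr // mul0r.
- by rewrite mul0r add0r !mul1r sumr_const.
Qed.
End PaleyKernel.

Section PaleyMatrix.
Variables (C : numClosedFieldType) (F : finFieldType).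
Hypothesis q4 : (4 %| #|F|.-1)%N.

Definition paley_mx : 'M[C]_#|{: option F}| :=
  \matrix_(i, j) (paley (enum_val i) (enum_val j))%:~R.

Lemma paley_mx_herm : paley_mx ^t* = paley_mx.
Proof. by apply/matrixP => i j; rewrite !mxE rmorph_int paley_sym. Qed.

Lemma paley_mx_sqr : paley_mx *m paley_mx = #|F|%:R%:M.
Proof.
apply/matrixP => i j; rewrite !mxE.
under eq_bigr => l _ do rewrite !mxE -intrM.
rewrite -rmorph_sum /= -(big_enum_val (fun c => paley _ c * paley c _)) /=.
rewrite paley_mul //.
by rewrite (inj_eq enum_val_inj) rmorphM /= !rmorph_nat mulr_natl.
Qed.

Lemma paley_mx_diag i : paley_mx i i = 0.
Proof. by rewrite mxE paley_diag. Qed.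

Lemma paley_mx_norm i j : i != j -> `|paley_mx i j| = 1.
Proof. by move=> ij; rewrite mxE -intr_norm paley_norm // (inj_eq enum_val_inj). Qed.

Lemma paley_CETF k :
  #|{: option F}| = (2 * k)%N -> exists f : 'I_(2 * k) -> 'I_k -> C, CETF f.
Proof.
move=> cardE; rewrite -cardE.
apply: (conference_CETF _ paley_mx_herm paley_mx_sqr paley_mx_diag paley_mx_norm cardE).
exact: ltnW (card_finNzRing_gt1 F).
Qed.
End PaleyMatrix.

Theorem theorem6 (R : realType) (k : nat) :
  (3 <= k)%N ->
  (exists (p alpha : nat), prime p /\ (2 * k = p ^ alpha + 1)%N /\ (2 * k = 2 %[mod 4])%N) ->
  exists f : 'I_(2 * k) -> 'I_k -> R[i], CETF f.
Proof.
move=> k_ge3 [p [a [p_pr [kE k_mod4]]]].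
have a_gt0 : (0 < a)%N by case: a kE => [|a _]; rewrite ?expn0; lia.
have [F _ cardF] := pPrimePowerField p_pr a_gt0.
have q4 : (4 %| #|F|.-1)%N by rewrite cardF; lia.
apply: (paley_CETF _ q4).
by rewrite card_option cardF kE addn1.
Qed.
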